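(* Let $(\mathfrak g_0,\mathfrak q)$ be a parabolic $CR$ algebra and $(\vartheta,\mathfrak h_0)$ an adapted Cartan pair, with root system $\mathcal R$ and parabolic set $\mathcal Q$ of $\mathfrak q$. For a fit Weyl chamber $C$, with order $\prec$, basis $\mathcal B$ and $\Phi=\mathcal Q^n\cap\mathcal B$, the following two conditions are equivalent: (a) if $\alpha\in\mathcal R_{\rm cpx}$, $\alpha\succ0$ and $\bar\alpha\prec0$, then $\alpha$ and $-\bar\alpha$ both belong to $\mathcal Q^n$; (b) $\bar\alpha\succ0$ for all $\alpha\in\mathcal B\setminus(\Phi\cup\mathcal R_{\rm im})$. Likewise the following are equivalent: (c) if $\alpha\in\mathcal R_{\rm cpx}$, $\alpha\succ0$ and $\bar\alpha\succ0$, then $\alpha$ and $\bar\alpha$ both belong to $\mathcal Q^n$; (d) $\bar\alpha\prec0$ for all $\alpha\in\mathcal B\setminus(\Phi\cup\mathcal R_{\rm re})$. Moreover there exists a fit Weyl chamber $C'$ satisfying (a) and (b), and there exists a fit Weyl chamber $C''$ satisfying (c) and (d).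
   Context: $\mathfrak g_0$ is a real semisimple Lie algebra with complexification $\mathfrak g$; $Z\mapsto\bar Z$ conjugation w.r.t. $\mathfrak g_0$; $\mathfrak q$ a complex parabolic subalgebra of $\mathfrak g$. An adapted Cartan pair is a Cartan involution $\vartheta$ of $\mathfrak g_0$ with a $\vartheta$-invariant Cartan subalgebra $\mathfrak h_0$ of $\mathfrak g_0$ contained in $\mathfrak q\cap\mathfrak g_0$. $\mathcal R$ is the root system of $\mathfrak g$ w.r.t. $\mathfrak h=\mathfrak h_0^{\mathbb C}$ (real on $\mathfrak h_{\mathbb R}=(\mathfrak h_0\cap\mathfrak p_0)\oplus i(\mathfrak h_0\cap\mathfrak k_0)$); $\bar\alpha$ is the root with $\mathfrak g^{\bar\alpha}=\overline{\mathfrak g^\alpha}$; $\mathcal R_{\rm re}=\{\bar\alpha=\alpha\}$, $\mathcal R_{\rm im}=\{\bar\alpha=-\alpha\}$, $\mathcal R_{\rm cpx}=\{\bar\alpha\neq\pm\alpha\}$. $\mathcal Q=\{\alpha:\mathfrak g^\alpha\subset\mathfrak q\}$, and $\mathcal Q^n=\{\alpha\in\mathcal Q: -\alpha\notin\mathcal Q\}$ (roots of the nilradical). A Weyl chamber $C$ (with induced order $\prec$ and basis $\mathcal B$ of simple positive roots) is fit for $\mathcal Q$ if every $C$-positive root lies in $\mathcal Q$. *)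

From HB Require Import structures.
From mathcomp Require Import all_boot all_order all_algebra.
From mathcomp Require Import reals.
Set Implicit Arguments. Unset Strict Implicit. Unset Printing Implicit Defensive.
Import Order.TTheory GRing.Theory Num.Theory.
Local Open Scope ring_scope.

Section RootData.
Variables (R : realType) (n : nat).
Local Notation V := 'rV[R]_n.

(* Standard (Killing-form) inner product on h_R (orthonormal coordinates);
   roots are identified with vectors of h_R via this inner product. *)
Definition dotv (u v : V) : R := (u *m v^T) 0 0.

Definition root_system (Rt : seq V) : Prop :=
  [/\ (0 : V) \notin Rt,
      (forall v : V, (forall a, a \in Rt -> dotv a v = 0) -> v = 0),
      (forall a b, a \in Rt -> b \in Rt ->
          (2 * dotv a b / dotv a a) \is a Num.int /\
          b - (2 * dotv a b / dotv a a) *: a \in Rt) &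
      (forall a (c : R), a \in Rt -> c *: a \in Rt -> c = 1 \/ c = -1)].

(* The conjugation Z |-> bar Z w.r.t. g_0 induces on h_R the linear
   isometric involution S; bar alpha = alpha S. *)
Definition conj_invol (Rt : seq V) (S : 'M[R]_n) : Prop :=
  [/\ S *m S = 1%:M, S *m S^T = 1%:M &
      (forall a, a \in Rt -> a *m S \in Rt)].

Definition rbar (S : 'M[R]_n) (a : V) : V := a *m S.

Definition is_real_root (S : 'M[R]_n) (a : V) := rbar S a = a.
Definition is_imag_root (S : 'M[R]_n) (a : V) := rbar S a = - a.
Definition is_cpx_root (S : 'M[R]_n) (a : V) :=
  rbar S a <> a /\ rbar S a <> - a.

(* A Weyl chamber is represented by a regular element H of it;
   alpha >- 0 iff alpha(H) > 0. *)
Definition regular (Rt : seq V) (H : V) := forall a, a \in Rt -> dotv a H != 0.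
Definition rpos (H : V) (a : V) := 0 < dotv a H.
Definition rneg (H : V) (a : V) := dotv a H < 0.

(* Q is the parabolic set of a parabolic subalgebra q containing h:
   closed under addition and containing a positive system. *)
Definition parabolic_set (Rt Q : seq V) : Prop :=
  [/\ (forall a, a \in Q -> a \in Rt),
      (forall a b, a \in Q -> b \in Q -> a + b \in Rt -> a + b \in Q) &
      exists H, regular Rt H /\ (forall a, a \in Rt -> rpos H a -> a \in Q)].

Definition in_Qn (Q : seq V) (a : V) := a \in Q /\ - a \notin Q.

Definition fit (Rt Q : seq V) (H : V) :=
  regular Rt H /\ (forall a, a \in Rt -> rpos H a -> a \in Q).

Definition simple_root (Rt : seq V) (H : V) (a : V) :=
  [/\ a \in Rt, rpos H a &
      ~ (exists b c, [/\ b \in Rt, c \in Rt, rpos H b, rpos H c & a = b + c])].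

Definition cond_a (Rt Q : seq V) (S : 'M[R]_n) (H : V) :=
  forall a, a \in Rt -> is_cpx_root S a -> rpos H a -> rneg H (rbar S a) ->
    in_Qn Q a /\ in_Qn Q (- rbar S a).

Definition cond_b (Rt Q : seq V) (S : 'M[R]_n) (H : V) :=
  forall a, simple_root Rt H a -> ~ in_Qn Q a -> ~ is_imag_root S a ->
    rpos H (rbar S a).

Definition cond_c (Rt Q : seq V) (S : 'M[R]_n) (H : V) :=
  forall a, a \in Rt -> is_cpx_root S a -> rpos H a -> rpos H (rbar S a) ->
    in_Qn Q a /\ in_Qn Q (rbar S a).

Definition cond_d (Rt Q : seq V) (S : 'M[R]_n) (H : V) :=
  forall a, simple_root Rt H a -> ~ in_Qn Q a -> ~ is_real_root S a ->
    rneg H (rbar S a).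

End RootData.

(* Every C-positive root is a sum of simple roots.  Suppose (b) and let g be
   positive with -g in Q and conj(g) negative.  As Q is closed under
   addition, g can be decomposed into simple roots beta with -beta in Q; no
   such beta lies in Q^n, so by (b) each is imaginary or has positive
   conjugate.  Conjugating, the sum of the imaginary summands equals -conj(g)
   plus the conjugates of the other summands, a sum of positive roots; by
   linear independence of the simple roots each of those conjugates is a sum
   of imaginary simple roots, hence imaginary.  So every summand of g is
   imaginary, and so is g.  This
   is what (a) needs, and (a) -> (b) is immediate.  A fit chamber satisfying
   (b) is reached by reflecting in simple roots beta violating (b): as -beta
   is in Q the new chamber is still fit, and the number of positive roots
   with negative conjugate drops.  Conditions (c) and (d) are (a) and (b) for
   the conjugation -S. *)

From mathcomp Require Import all_boot all_order all_algebra.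
From mathcomp Require Import reals.
From mathcomp Require Import ring lra.
From Stdlib Require Import Classical.
Set Implicit Arguments. Unset Strict Implicit. Unset Printing Implicit Defensive.
Import Order.TTheory GRing.Theory Num.Theory.
Local Open Scope ring_scope.

Lemma count_lt_in (T : eqType) (p1 p2 : pred T) (s : seq T) x :
  {in s, subpred p1 p2} -> x \in s -> p2 x -> ~~ p1 x ->
  (count p1 s < count p2 s)%N.
Proof.
move=> sub12 xs p2x p1x.
rewrite -[count p2 s]size_filter -(count_predC p1) count_filter.
have -> : count (predI p1 p2) s = count p1 s.
  by apply: eq_in_count => y ys /=; case: (boolP (p1 y)) => //= /(sub12 y ys).
rewrite -[X in (X < _)%N]addn0 ltn_add2l -has_count; apply/hasP; exists x => //.
by rewrite mem_filter p2x.
Qed.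

Section DotProduct.
Variables (R : realType) (n : nat).
Implicit Types u v w : 'rV[R]_n.

Lemma dotvE u v : dotv u v = \sum_j u 0 j * v 0 j.
Proof. by rewrite /dotv !mxE; apply: eq_bigr => j _; rewrite mxE. Qed.

Lemma dotvC u v : dotv u v = dotv v u.
Proof. by rewrite /dotv -[u *m _]trmxK trmx_mul trmxK mxE. Qed.

Lemma dotvDl u v w : dotv (u + v) w = dotv u w + dotv v w.
Proof. by rewrite /dotv mulmxDl mxE. Qed.

Lemma dotvZl (c : R) u w : dotv (c *: u) w = c * dotv u w.
Proof. by rewrite /dotv -scalemxAl mxE. Qed.

Lemma dotvNl u w : dotv (- u) w = - dotv u w.
Proof. by rewrite -scaleN1r dotvZl mulN1r. Qed.

Lemma dotvBl u v w : dotv (u - v) w = dotv u w - dotv v w.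
Proof. by rewrite dotvDl dotvNl. Qed.

Lemma dotv0l w : dotv 0 w = 0.
Proof. by rewrite -(scale0r 0) dotvZl mul0r. Qed.

Lemma dotvDr u v w : dotv w (u + v) = dotv w u + dotv w v.
Proof. by rewrite !(dotvC w) dotvDl. Qed.

Lemma dotvZr (c : R) u w : dotv w (c *: u) = c * dotv w u.
Proof. by rewrite !(dotvC w) dotvZl. Qed.

Lemma dotvNr u w : dotv w (- u) = - dotv w u.
Proof. by rewrite !(dotvC w) dotvNl. Qed.

Lemma dotvBr u v w : dotv w (u - v) = dotv w u - dotv w v.
Proof. by rewrite dotvDr dotvNr. Qed.

Lemma dotv_suml (I : Type) (r : seq I) (F : I -> 'rV[R]_n) w :
  dotv (\sum_(i <- r) F i) w = \sum_(i <- r) dotv (F i) w.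
Proof. by elim: r => [|i r IH]; rewrite ?big_nil ?dotv0l // !big_cons dotvDl IH. Qed.

Lemma dotv_sumr (I : Type) (r : seq I) (F : I -> 'rV[R]_n) w :
  dotv w (\sum_(i <- r) F i) = \sum_(i <- r) dotv w (F i).
Proof. by rewrite dotvC dotv_suml; apply: eq_bigr => i _; rewrite dotvC. Qed.

Lemma dotvv_ge0 v : 0 <= dotv v v.
Proof. by rewrite dotvE sumr_ge0 // => j _; rewrite -expr2 sqr_ge0. Qed.

Lemma dotvv_eq0 v : (dotv v v == 0) = (v == 0).
Proof.
apply/idP/eqP => [|->]; last by rewrite dotv0l.
rewrite dotvE psumr_eq0 => [/allP v0|j _]; last by rewrite -expr2 sqr_ge0.
by apply/rowP => j; rewrite mxE; have := v0 j (mem_index_enum j); rewrite mulf_eq0 orbb => /eqP.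
Qed.


Lemma dotv_proportional u v :
  u != 0 -> dotv u u * dotv v v <= dotv u v ^+ 2 ->
  v = (dotv u v / dotv u u) *: u.
Proof.
move=> u0 le_uv; have uu0 : 0 < dotv u u by rewrite lt_def dotvv_eq0 u0 dotvv_ge0.
pose w := dotv u u *: v - dotv u v *: u.
have ww : dotv w w = dotv u u * (dotv u u * dotv v v - dotv u v ^+ 2).
  rewrite /w dotvBl !dotvBr !dotvZl !dotvZr (dotvC v u); ring.
have /eqP : w = 0.
  by apply/eqP; rewrite -dotvv_eq0 eq_le dotvv_ge0 andbT ww pmulr_rle0 ?subr_le0.
rewrite subr_eq0 => /eqP wE.
by rewrite mulrC -scalerA -wE scalerA mulVf ?scale1r ?gt_eqF.
Qed.

End DotProduct.


Lemma intr_ge2 (R : archiNumDomainType) (x : R) : x \is a Num.int -> 0 < x -> x != 1 -> 2 <= x.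
Proof.
move=> xi x0 x1; have /natrP[k xk] : x \is a Num.nat by rewrite -intrEge0 ?ltW.
move: x0 x1; rewrite xk ltr0n (ler_nat _ 2).
by case: k {xk} => [|[|k]] //; rewrite eqxx.
Qed.

Section RootSystem.
Variables (R : realType) (n : nat) (Rt : seq 'rV[R]_n).
Hypothesis RS : root_system Rt.
Implicit Types a b u v : 'rV[R]_n.

Definition refl b v := v - (2 * dotv b v / dotv b b) *: b.

Lemma root_neq0 a : a \in Rt -> a != 0.
Proof. by case: RS => Rt0 _ _ _ aR; apply: contraNneq Rt0 => <-. Qed.

Lemma root_dotv_gt0 a : a \in Rt -> 0 < dotv a a.
Proof. by move=> aR; rewrite lt_def dotvv_eq0 root_neq0 // dotvv_ge0. Qed.

Lemma cartan_int a b : a \in Rt -> b \in Rt -> 2 * dotv a b / dotv a a \is a Num.int.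
Proof. by case: RS => _ _ cartan _ aR bR; case: (cartan a b aR bR). Qed.

Lemma refl_root a b : a \in Rt -> b \in Rt -> refl a b \in Rt.
Proof. by case: RS => _ _ cartan _ aR bR; case: (cartan a b aR bR). Qed.

Lemma root_scaleP a (c : R) : a \in Rt -> c *: a \in Rt -> c = 1 \/ c = -1.
Proof. by case: RS => _ _ _; apply. Qed.

Lemma refl_self a : a \in Rt -> refl a a = - a.
Proof.
move=> aR; rewrite /refl mulfK ?gt_eqF ?root_dotv_gt0 //.
by rewrite scaler_nat mulr2n opprD addrA subrr add0r.
Qed.

Lemma rootN a : a \in Rt -> - a \in Rt.
Proof. by move=> aR; rewrite -refl_self // refl_root. Qed.

Lemma refl_dotvC a u v : dotv (refl a u) v = dotv u (refl a v).
Proof. rewrite /refl dotvBl dotvZl dotvBr dotvZr (dotvC u a); ring. Qed.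

Lemma rpos_refl a u H : rpos (refl a H) u = rpos H (refl a u).
Proof. by rewrite /rpos refl_dotvC. Qed.

Lemma rneg_refl a u H : rneg (refl a H) u = rneg H (refl a u).
Proof. by rewrite /rneg refl_dotvC. Qed.

Lemma reflN a v : refl a (- v) = - refl a v.
Proof. by rewrite /refl dotvNr mulrN mulNr scaleNr opprD. Qed.

Lemma reflK a : a \in Rt -> involutive (refl a).
Proof.
move=> aR v; have aa0 := root_dotv_gt0 aR.
have av : dotv a (refl a v) = - dotv a v.
  rewrite /refl dotvBr dotvZr divfK ?gt_eqF //; ring.
by rewrite {1}/refl av mulrN mulNr scaleNr opprK subrK.
Qed.

Lemma rootB a b : a \in Rt -> b \in Rt -> 0 < dotv a b -> a != b -> a - b \in Rt.
Proof.
move=> aR bR ab_gt0 neq_ab.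
have aa0 := root_dotv_gt0 aR; have bb0 := root_dotv_gt0 bR.
have [nba1|nba1] := eqVneq (2 * dotv b a / dotv b b) 1.
  by have := refl_root bR aR; rewrite /refl nba1 scale1r.
have [nab1|nab1] := eqVneq (2 * dotv a b / dotv a a) 1.
  by have := rootN (refl_root aR bR); rewrite /refl nab1 scale1r opprB.
have nba := cartan_int bR aR; rewrite dotvC in nba nba1.
have gt0 c : 0 < c -> 0 < 2 * dotv a b / c by move=> c0; rewrite divr_gt0 ?mulr_gt0.
have := intr_ge2 (cartan_int aR bR) (gt0 _ aa0) nab1.
have := intr_ge2 nba (gt0 _ bb0) nba1.
rewrite !ler_pdivlMr // => le_b le_a.
have bE : b = (dotv a b / dotv a a) *: a.
  apply: dotv_proportional; first exact: root_neq0.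
  by rewrite expr2; apply: ler_pM; [exact: ltW|exact: ltW|lra|lra].
have [c1|cN1] : dotv a b / dotv a a = 1 \/ dotv a b / dotv a a = -1.
  by apply: root_scaleP aR _; rewrite -bE.
- by rewrite bE c1 scale1r eqxx in neq_ab.
- by have := divr_gt0 ab_gt0 aa0; rewrite cN1 ltr0N1.
Qed.

End RootSystem.

Section Chamber.
Variables (R : realType) (n : nat) (Rt : seq 'rV[R]_n) (H : 'rV[R]_n).
Hypotheses (RS : root_system Rt) (reg : regular Rt H).
Implicit Types (a b c g x y : 'rV[R]_n) (l m ps : seq 'rV[R]_n).
Local Notation simple := (simple_root Rt H).

Lemma root_posVneg a : a \in Rt -> rpos H a \/ rneg H a.
Proof.
move=> aR; rewrite /rpos /rneg.
by case: (ltgtP (dotv a H) 0) (reg aR) => //; [right | left].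
Qed.

Lemma rneg_opp a : rneg H (- a) = rpos H a.
Proof. by rewrite /rneg /rpos dotvNl oppr_lt0. Qed.

Lemma rpos_opp a : rpos H (- a) = rneg H a.
Proof. by rewrite /rneg /rpos dotvNl oppr_gt0. Qed.

Lemma rpos_rnegF a : rpos H a -> rneg H a = false.
Proof. by rewrite /rpos /rneg => a_pos; rewrite ltNge ltW. Qed.

Lemma regular_refl b : b \in Rt -> regular Rt (refl b H).
Proof. by move=> bR a aR; rewrite -refl_dotvC reg ?refl_root. Qed.

Lemma simple_root_dotv_le0 a b : simple a -> simple b -> a != b -> dotv a b <= 0.
Proof.
move=> [aR a_pos a_irr] [bR b_pos b_irr] neq_ab; rewrite leNgt; apply/negP => ab_gt0.
have abR := rootB RS aR bR ab_gt0 neq_ab.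
case: (root_posVneg abR) => [ab_pos|ab_neg].
  by apply: a_irr; exists b, (a - b); split; rewrite // addrC subrK.
apply: b_irr; exists a, (b - a); split=> //.
- by rewrite -opprB rootN.
- by rewrite -opprB rpos_opp.
- by rewrite addrC subrK.
Qed.

Lemma positive_root_decomposition (P : 'rV[R]_n -> Prop) :
    (forall b c, b \in Rt -> c \in Rt -> rpos H b -> rpos H c ->
       P (b + c) -> P b /\ P c) ->
  forall a, a \in Rt -> rpos H a -> P a ->
  exists2 l, {in l, forall x, simple x /\ P x} & a = \sum_(x <- l) x.
Proof.
move=> P_split a; have [N] := ubnP (count (fun b => dotv b H < dotv a H) Rt).
elim: N a => // N IH a lt_aN aR a_pos Pa.
have [a_simple|a_split] := classic (simple a).
  by exists [:: a]; [move=> x; rewrite inE => /eqP -> | rewrite big_seq1].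
have [b [c [bR cR b_pos c_pos abc]]] :
    exists b c, [/\ b \in Rt, c \in Rt, rpos H b, rpos H c & a = b + c].
  by apply: NNPP => no_split; apply: a_split.
have [Pb Pc] : P b /\ P c by apply: P_split; rewrite -?abc.
have lower x y : x \in Rt -> rpos H y -> a = x + y ->
    (count (fun z => (dotv z H < dotv x H)%R) Rt < N)%N.
  move=> xR y_pos axy; rewrite -ltnS; apply: leq_trans lt_aN; rewrite ltnS.
  have lt_xa : dotv x H < dotv a H by rewrite axy dotvDl ltrDl.
  apply: (count_lt_in (x := x)) => //=; last by rewrite ltxx.
  by move=> z _ /lt_trans; apply.
have acb : a = c + b by rewrite abc addrC.
rewrite abc; have [lb sb ->] := IH b (lower b c bR c_pos abc) bR b_pos Pb.
have [lc sc ->] := IH c (lower c b cR b_pos acb) cR c_pos Pc.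
exists (lb ++ lc); last by rewrite big_cat.
by move=> x; rewrite mem_cat => /orP [/sb|/sc].
Qed.

Lemma positive_root_simple_sum a : a \in Rt -> rpos H a ->
  exists2 l, {in l, forall x, simple x} & a = \sum_(x <- l) x.
Proof.
move=> aR a_pos.
have [//|l sl ->] := @positive_root_decomposition (fun _ => True) _ a aR a_pos I.
by exists l => // x /sl [].
Qed.

Lemma positive_roots_simple_sum ps : {in ps, forall y, y \in Rt /\ rpos H y} ->
  exists2 l, {in l, forall x, simple x} & \sum_(y <- ps) y = \sum_(x <- l) x.
Proof.
elim: ps => [|y ps IH] ps_pos; first by exists [::] => // x; rewrite in_nil.
have [yR y_pos] := ps_pos y (mem_head _ _).
rewrite big_cons; have [l1 s1 ->] := positive_root_simple_sum yR y_pos.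
have [|l2 s2 ->] := IH; first by move=> z zps; apply: ps_pos; rewrite inE zps orbT.
exists (l1 ++ l2); last by rewrite big_cat.
by move=> x; rewrite mem_cat => /orP [/s1|/s2].
Qed.

Lemma rpos_simple_sum l : {in l, forall x, simple x} -> l != [::] ->
  rpos H (\sum_(x <- l) x).
Proof.
case: l => // x l sl _; rewrite /rpos dotv_suml big_cons.
have [_ x_pos _] := sl x (mem_head _ _); apply: ltr_pwDl x_pos _.
rewrite big_seq sumr_ge0 // => y yl; apply: ltW.
by have [_ y_pos _] := sl y (mem_behead (s := x :: l) yl).
Qed.

Lemma simple_sum_disjoint l1 l2 :
  {in l1, forall x, simple x} -> {in l2, forall x, simple x} ->
  ~~ has (mem l2) l1 -> \sum_(x <- l1) x = \sum_(x <- l2) x -> l1 = [::].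
Proof.
move=> s1 s2 dis e.
have le0 : dotv (\sum_(x <- l1) x) (\sum_(y <- l2) y) <= 0.
  rewrite dotv_suml big_seq sumr_le0 // => x xl1.
  rewrite dotv_sumr big_seq sumr_le0 // => y yl2.
  apply: simple_root_dotv_le0; [exact: s1 | exact: s2 |].
  by apply: contraNneq (hasPn dis x xl1) => ->.
have sum0 : \sum_(x <- l1) x = 0.
  by apply/eqP; rewrite -dotvv_eq0 eq_le dotvv_ge0 andbT {2}e.
apply/eqP/negPn/negP => /(rpos_simple_sum s1).
by rewrite sum0 /rpos dotv0l ltxx.
Qed.

Lemma simple_sum_perm l1 l2 :
  {in l1, forall x, simple x} -> {in l2, forall x, simple x} ->
  \sum_(x <- l1) x = \sum_(x <- l2) x -> perm_eq l1 l2.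
Proof.
have [N] := ubnP (size l1); elim: N l1 l2 => // N IH l1 l2 lt_l1N s1 s2 e.
have [/hasP [x x1 x2]|dis] := boolP (has (mem l2) l1); last first.
  have l1_nil := simple_sum_disjoint s1 s2 dis e.
  rewrite l1_nil big_nil in e; rewrite l1_nil.
  rewrite (simple_sum_disjoint (l1 := l2) (l2 := [::])) ?big_nil //.
  by apply/hasPn.
have p1 := perm_to_rem x1; have p2 := perm_to_rem x2.
have e' : \sum_(y <- rem x l1) y = \sum_(y <- rem x l2) y.
  by move: e; rewrite (perm_big _ p1) (perm_big _ p2) !big_cons; apply: addrI.
have lt_remN : (size (rem x l1) < N)%N by move: lt_l1N; rewrite (perm_size p1).
apply: (perm_trans p1); rewrite perm_sym (perm_trans p2) // perm_cons perm_sym.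
by apply: IH e' => // y /mem_rem; [apply: s1 | apply: s2].
Qed.

Lemma simple_sum_summand l ps y :
  {in l, forall x, simple x} -> {in ps, forall z, z \in Rt /\ rpos H z} ->
  \sum_(x <- l) x = \sum_(z <- ps) z -> y \in ps ->
  exists2 m, {subset m <= l} & y = \sum_(x <- m) x.
Proof.
move=> sl ps_pos e yps; have [yR y_pos] := ps_pos y yps.
have [m sm ym] := positive_root_simple_sum yR y_pos.
have [|m' sm' em'] := positive_roots_simple_sum (ps := rem y ps).
  by move=> z /mem_rem; apply: ps_pos.
exists m => // x xm.
have /perm_mem -> : perm_eq l (m ++ m').
  apply: simple_sum_perm => //; first by move=> z; rewrite mem_cat => /orP[/sm|/sm'].
  by rewrite e (perm_big _ (perm_to_rem yps)) big_cons big_cat -ym -em'.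
by rewrite mem_cat xm.
Qed.

Lemma refl_simple_pos b g : simple b -> g \in Rt -> rpos H g -> g != b ->
  rpos H (refl b g).
Proof.
move=> sb gR g_pos neq_gb; have [bR b_pos _] := sb.
have rgR := refl_root RS bR gR.
case: (root_posVneg rgR) => // rg_neg; exfalso.
set k := 2 * dotv b g / dotv b b.
have k_gt0 : 0 < k.
  have := rg_neg; rewrite /rneg /refl dotvBl dotvZl -/k /rpos in g_pos b_pos * => ?.
  by rewrite -(pmulr_lgt0 _ b_pos); lra.
have /natrP [m km] : k \is a Num.nat by rewrite -intrEge0 ?(ltW k_gt0) // (cartan_int RS bR gR).
have [l lb gl] : exists2 l, {subset l <= nseq m b} & g = \sum_(x <- l) x.
  apply: (simple_sum_summand (ps := [:: g; - refl b g])); last exact: mem_head.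
  - by move=> x; rewrite mem_nseq => /andP[_ /eqP ->].
  - move=> z; rewrite !inE => /orP[/eqP ->|/eqP ->]; first by [].
    by split; rewrite ?(rootN RS) ?rpos_opp.
  - rewrite big_cons big_seq1 /refl opprB addrC subrK -/k km scaler_nat.
    by rewrite big_nseq iter_addr_0.
have gE : g = (size l)%:R *: b.
  rewrite gl scaler_nat (eq_big_seq (fun=> b)) => [|x /lb]; last first.
    by rewrite mem_nseq => /andP[_ /eqP].
  by rewrite big_const_seq count_predT iter_addr_0.
have [l1|lN1] : (size l)%:R = 1 :> R \/ (size l)%:R = -1 :> R.
  by apply: (root_scaleP RS bR); rewrite -gE.
- by rewrite gE l1 scale1r eqxx in neq_gb.
- by have := ler0n R (size l); rewrite lN1 ler0N1.
Qed.

Lemma rpos_of_refl b a : simple b -> a \in Rt -> refl b a != b ->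
  rpos H (refl b a) -> rpos H a.
Proof.
move=> sb aR neq_ab sa_pos; have [bR _ _] := sb.
by rewrite -(reflK RS bR a) refl_simple_pos ?refl_root.
Qed.

End Chamber.

Lemma parabolic_oppDr (R : realType) (n : nat) (Rt Q : seq 'rV[R]_n) b c :
  parabolic_set Rt Q -> c \in Q -> - (b + c) \in Q -> - b \in Rt -> - b \in Q.
Proof.
case=> _ Qadd _ cQ bcQ bR; have bE : - b = - (b + c) + c by rewrite opprD subrK.
by rewrite bE Qadd // -bE.
Qed.

Section Conjugation.
Variables (R : realType) (n : nat) (Rt Q : seq 'rV[R]_n) (T : 'M[R]_n).
Hypotheses (RS : root_system Rt) (PQ : parabolic_set Rt Q).
Hypotheses (TT : T *m T = 1%:M) (Troot : forall a, a \in Rt -> rbar T a \in Rt).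
Implicit Types (a b g x : 'rV[R]_n) (l m : seq 'rV[R]_n).
Local Notation rbar := (rbar T).

Lemma rbarK : involutive rbar.
Proof. by move=> a; rewrite /rbar -mulmxA TT mulmx1. Qed.

Lemma rbarN a : rbar (- a) = - rbar a.
Proof. exact: mulNmx. Qed.

Lemma rbar_sum m : rbar (\sum_(x <- m) x) = \sum_(x <- m) rbar x.
Proof. exact: mulmx_suml. Qed.

Lemma imag_root_sum m : {in m, forall x, is_imag_root T x} ->
  is_imag_root T (\sum_(x <- m) x).
Proof. by move=> m_imag; rewrite /is_imag_root rbar_sum -sumrN; apply: eq_big_seq. Qed.

Lemma imag_root_rbar a : is_imag_root T (rbar a) -> is_imag_root T a.
Proof. by rewrite /is_imag_root rbarK => aE; rewrite [in RHS]aE opprK. Qed.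

Section RegularChamber.
Variable H : 'rV[R]_n.
Hypothesis reg : regular Rt H.
Local Notation simple := (simple_root Rt H).

Lemma imag_simple_sum g l : g \in Rt -> {in l, forall x, simple x} ->
  {in l, forall x, is_imag_root T x \/ rpos H (rbar x)} ->
  g = \sum_(x <- l) x -> rneg H (rbar g) -> is_imag_root T g.
Proof.
move=> gR sl l_imag_pos gE g_neg.
pose I := [seq x <- l | rbar x == - x]; pose J := [seq x <- l | rbar x != - x].
have lIJ : \sum_(x <- l) x = \sum_(x <- I) x + \sum_(x <- J) x.
  by rewrite (bigID (fun x => rbar x == - x)) !big_filter.
have I_imag : {in I, forall x, is_imag_root T x}.
  by move=> x; rewrite mem_filter => /andP[/eqP].
suff J0 : \sum_(x <- J) x = 0 by rewrite gE lIJ J0 addr0; apply: imag_root_sum.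
rewrite big_seq big1 // => b0 b0J; exfalso.
have b0_nimag : rbar b0 != - b0 by move: b0J; rewrite mem_filter => /andP[].
pose ps := - rbar g :: map rbar J.
have rbar_g : rbar g = - \sum_(x <- I) x + \sum_(x <- J) rbar x.
  rewrite gE rbar_sum /I /J !big_filter (bigID (fun x => rbar x == - x)) /= -sumrN.
  by congr (_ + _); apply: eq_bigr => x /eqP.
have eI : \sum_(x <- I) x = \sum_(z <- ps) z.
  by rewrite big_cons big_map rbar_g opprD opprK subrK.
have sI : {in I, forall x, simple x}.
  by move=> x; rewrite mem_filter => /andP[_ /sl].
have ps_pos : {in ps, forall z, z \in Rt /\ rpos H z}.
  move=> z; rewrite inE => /predU1P[->|/mapP[x xJ ->]].
    by rewrite rpos_opp (rootN RS) ?Troot.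
  move: xJ; rewrite mem_filter => /andP[x_nimag xl]; have [xR _ _] := sl x xl.
  split; first exact: Troot.
  by case: (l_imag_pos x xl) => // x_imag; rewrite x_imag eqxx in x_nimag.
have b0ps : rbar b0 \in ps by rewrite inE map_f ?orbT.
have [m mI b0E] := simple_sum_summand RS reg sI ps_pos eI b0ps.
have /imag_root_rbar : is_imag_root T (rbar b0).
  by rewrite b0E; apply: imag_root_sum => x /mI /I_imag.
by move=> b0_imag; rewrite b0_imag eqxx in b0_nimag.
Qed.

End RegularChamber.

Section FitChamber.
Variable H : 'rV[R]_n.
Hypothesis fitH : fit Rt Q H.

Let reg : regular Rt H. Proof. by case: fitH. Qed.

Lemma fit_pos_in a : a \in Rt -> rpos H a -> a \in Q.
Proof. by case: fitH => _; apply. Qed.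

Lemma cond_b_imag g : cond_b Rt Q T H -> g \in Rt -> rpos H g -> - g \in Q ->
  rneg H (rbar g) -> is_imag_root T g.
Proof.
move=> hb gR g_pos gQ g_neg.
have oppQ_split b c : b \in Rt -> c \in Rt -> rpos H b -> rpos H c ->
    - (b + c) \in Q -> - b \in Q /\ - c \in Q.
  move=> bR cR b_pos c_pos bcQ; split.
    by apply: (parabolic_oppDr PQ (fit_pos_in cR c_pos)) bcQ (rootN RS bR).
  by rewrite addrC in bcQ; apply: (parabolic_oppDr PQ (fit_pos_in bR b_pos)) bcQ (rootN RS cR).
have [l lQ gE] := positive_root_decomposition oppQ_split gR g_pos gQ.
have sl : {in l, forall x, simple_root Rt H x} by move=> x /lQ[].
apply: (imag_simple_sum reg gR sl _ gE g_neg) => x /lQ[sx xQ].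
have [xR x_pos _] := sx.
have [x_imag|x_nimag] := classic (is_imag_root T x); [by left | right].
by apply: hb => // -[_]; rewrite xQ.
Qed.

Lemma cond_a_iff_b : cond_a Rt Q T H <-> cond_b Rt Q T H.
Proof.
split=> [ha a sa a_nQn a_nimag | hb a aR [a_nreal a_nimag] a_pos abar_neg].
  have [aR a_pos _] := sa.
  case: (root_posVneg reg (Troot aR)) => // abar_neg.
  have [a_real|a_nreal] := classic (rbar a = a).
    by move: abar_neg; rewrite a_real (rpos_rnegF a_pos).
  by case: a_nQn; case: (ha a aR (conj a_nreal a_nimag) a_pos abar_neg).
have abarR : - rbar a \in Rt by rewrite (rootN RS) ?Troot.
have abar_pos : rpos H (- rbar a) by rewrite rpos_opp.
split; split; [exact: fit_pos_in | apply/negP => aQ | exact: fit_pos_in | ].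
  by apply: a_nimag; apply: cond_b_imag.
rewrite opprK; apply/negP => abarQ; apply: a_nimag.
have := cond_b_imag hb abarR abar_pos; rewrite opprK => /(_ abarQ).
rewrite rbarN rbarK rneg_opp => /(_ a_pos).
by rewrite /is_imag_root rbarN rbarK opprK.
Qed.

End FitChamber.

Definition num_flipped H := count (fun a => rpos H a && rneg H (rbar a)) Rt.

Lemma fit_refl H b : fit Rt Q H -> simple_root Rt H b -> - b \in Q ->
  fit Rt Q (refl b H).
Proof.
move=> [reg H_fit] sb bQ; have [bR _ _] := sb.
split=> [|a aR]; first exact: regular_refl.
rewrite rpos_refl => sa_pos; have [sab|sa_nb] := eqVneq (refl b a) b.
  by rewrite -(reflK RS bR a) sab (refl_self RS bR).
by apply: H_fit (rpos_of_refl RS reg sb aR sa_nb sa_pos).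
Qed.

Lemma num_flipped_refl H b : regular Rt H -> simple_root Rt H b ->
  ~ is_imag_root T b -> rneg H (rbar b) ->
  (num_flipped (refl b H) < num_flipped H)%N.
Proof.
move=> reg sb b_nimag bbar_neg; have [bR b_pos _] := sb.
apply: (count_lt_in (x := b)) => //=; last first.
- by rewrite rpos_refl (refl_self RS bR) rpos_opp rpos_rnegF.
- by rewrite b_pos.
move=> a aR /andP[]; rewrite rpos_refl rneg_refl => sa_pos sabar_neg.
have [sab|sa_nb] := eqVneq (refl b a) b.
  have aE : a = - b by rewrite -(reflK RS bR a) sab (refl_self RS bR).
  have sbbar_nb : refl b (rbar b) != b.
    apply/eqP => sbbar; apply: b_nimag.
    by rewrite /is_imag_root -(reflK RS bR (rbar b)) sbbar (refl_self RS bR).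
  move: sabar_neg; rewrite aE rbarN reflN rneg_opp.
  by move=> /(rpos_of_refl RS reg sb (Troot bR) sbbar_nb) /rpos_rnegF; rewrite bbar_neg.
have a_pos := rpos_of_refl RS reg sb aR sa_nb sa_pos; rewrite a_pos /=.
case: (root_posVneg reg (Troot aR)) => // abar_pos.
have [abar_b|abar_nb] := eqVneq (rbar a) b.
  by move: a_pos; rewrite -(rbarK a) abar_b => /rpos_rnegF; rewrite bbar_neg.
by move: sabar_neg; rewrite (rpos_rnegF (refl_simple_pos RS reg sb _ abar_pos abar_nb)) ?Troot.
Qed.

Lemma exists_fit_cond_b : exists H, fit Rt Q H /\ cond_b Rt Q T H.
Proof.
have [H0 fitH0] : exists H, fit Rt Q H by case: PQ => _ _ [H0 ?]; exists H0.
have [N] := ubnP (num_flipped H0); elim: N H0 fitH0 => // N IH H fitH lt_HN.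
have [hb|not_hb] := classic (cond_b Rt Q T H); first by exists H.
have [b [sb b_nQn b_nimag b_npos]] : exists b, [/\ simple_root Rt H b,
    ~ in_Qn Q b, ~ is_imag_root T b & ~ rpos H (rbar b)].
  apply: NNPP => none; apply: not_hb => a sa a_nQn a_nimag.
  by apply: NNPP => a_npos; apply: none; exists a.
have [bR b_pos _] := sb; have [reg _] := fitH.
have bQ : - b \in Q.
  by apply/negPn/negP => nbQ; apply: b_nQn; split; first exact: (fit_pos_in fitH bR b_pos).
have bbar_neg : rneg H (rbar b) by case: (root_posVneg reg (Troot bR)).
apply: (IH (refl b H)); first exact: fit_refl.
by apply: leq_trans (num_flipped_refl reg sb b_nimag bbar_neg) _; rewrite -ltnS.
Qed.

End Conjugation.

Section OppositeConjugation.
Variables (R : realType) (n : nat) (Rt Q : seq 'rV[R]_n) (S : 'M[R]_n) (H : 'rV[R]_n).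

Lemma rbar_opp a : rbar (- S) a = - rbar S a.
Proof. exact: mulmxN. Qed.

Lemma cpx_root_opp a : is_cpx_root (- S) a <-> is_cpx_root S a.
Proof.
rewrite /is_cpx_root rbar_opp; split; case=> neq_a neq_Na; split=> e.
- by apply: neq_Na; rewrite e.
- by apply: neq_a; rewrite e opprK.
- by apply: neq_Na; rewrite -[rbar S a]opprK e.
- by apply: neq_a; apply: oppr_inj.
Qed.

Lemma imag_root_opp a : is_imag_root (- S) a <-> is_real_root S a.
Proof. by rewrite /is_imag_root /is_real_root rbar_opp; split=> [/oppr_inj|->]. Qed.

Lemma cond_c_opp : cond_c Rt Q S H <-> cond_a Rt Q (- S) H.
Proof.
split=> hc a aR a_cpx a_pos.
  by rewrite !rbar_opp rneg_opp opprK => abar_pos; apply: hc => //; apply/cpx_root_opp.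
move=> abar_pos; have := hc a aR (iffRL (cpx_root_opp a) a_cpx) a_pos.
by rewrite !rbar_opp rneg_opp opprK; apply.
Qed.

Lemma cond_d_opp : cond_d Rt Q S H <-> cond_b Rt Q (- S) H.
Proof.
split=> hd a sa a_nQn a_nreal.
  by rewrite rbar_opp rpos_opp; apply: hd => // /imag_root_opp.
by rewrite -rpos_opp -rbar_opp; apply: hd => // /imag_root_opp.
Qed.

End OppositeConjugation.

Unset Implicit Arguments.

Theorem lemma4p3 (R : realType) (n : nat) (Rt Q : seq 'rV[R]_n)
    (S : 'M[R]_n) :
  root_system Rt -> conj_invol Rt S -> parabolic_set Rt Q ->
  [/\ (forall H : 'rV[R]_n, fit Rt Q H ->
         (cond_a Rt Q S H <-> cond_b Rt Q S H) /\
         (cond_c Rt Q S H <-> cond_d Rt Q S H)),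
      (exists H' : 'rV[R]_n, [/\ fit Rt Q H', cond_a Rt Q S H' & cond_b Rt Q S H']) &
      (exists H'' : 'rV[R]_n, [/\ fit Rt Q H'', cond_c Rt Q S H'' & cond_d Rt Q S H''])].
Proof.
move=> RS [SS _ Sroot] PQ.
have NSS : - S *m - S = 1%:M by rewrite mulNmx mulmxN opprK.
have NSroot a : a \in Rt -> rbar (- S) a \in Rt.
  by move=> aR; rewrite rbar_opp (rootN RS) ?Sroot.
have ab H : fit Rt Q H -> cond_a Rt Q S H <-> cond_b Rt Q S H.
  exact: cond_a_iff_b.
have cd H : fit Rt Q H -> cond_c Rt Q S H <-> cond_d Rt Q S H.
  by move=> fitH; rewrite cond_c_opp cond_d_opp; apply: cond_a_iff_b.
split=> [H fitH | | ]; first by split; [apply: ab | apply: cd].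
- have [H [fitH hb]] := exists_fit_cond_b RS PQ SS Sroot.
  by exists H; split; rewrite ?ab.
- have [H [fitH hd]] := exists_fit_cond_b RS PQ NSS NSroot.
  by exists H; split; rewrite ?cd // cond_d_opp.
Qed.
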